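(* Let $\gamma\in[0,1)$ and let $\tau=(s_k,a_k,r_k,s_{k+1})_{k=1,\dots,T}$ be a (possibly random) trajectory of finite length $T$ in an MDP, with real rewards $r_k$. Let $Q^\pi:\mathcal S\times\mathcal A\to\mathbb R$ be a fixed function (the action-value function of a policy $\pi$). For $i\in\{1,2\}$ and $k\in\{1,\dots,T\}$ let $$\tilde Q^{(i)}(s_k,a_k)=Q^\pi(s_k,a_k)+\epsilon^{(i)}_k ,$$ where, conditionally on $\tau$, the noise terms are integrable with $\mathbb E[\epsilon^{(i)}_k\mid\tau]=0$, and the family $(\epsilon^{(1)}_k)_k$ is independent of the family $(\epsilon^{(2)}_k)_k$. Set $\tilde Q^{(i)}(s_k,a_k)=0$ for $k>T$. For a fixed $t\in\{1,\dots,T\}$ define recursively, for $i\in\{1,2\}$ and integers $k\ge t$, $h\ge 0$, $$V^{(i)}_{k,h}=\begin{cases} r_k+\gamma V^{(i)}_{k+1,h-1}, & h>0,\\ \tilde Q^{(i)}(s_k,a_k), & h=0,\end{cases}$$ with the convention $r_k=0$ and $V^{(i)}_{k,h}=0$ for $k>T$. Let $h^*_{(i)}\in\arg\max_{h>0}V^{(i)}_{t,h}$ (chosen by any fixed tie-breaking rule, as a function of $(V^{(i)}_{t,h})_h$ only), and, writing $j$ for the index in $\{1,2\}$ different from $i$, set $R^{(i)}_t=V^{(j)}_{t,h^*_{(i)}}$. For $0\le h\le T-t$ define $$Q^\pi_{t,h}=\sum_{l=0}^{h}\gamma^l r_{t+l}+\begin{cases}\gamma^{h+1}Q^\pi(s_{t+h+1},a_{t+h+1}),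 & h<T-t,\\ 0, & h=T-t.\end{cases}$$ Then for each $i\in\{1,2\}$, $$\mathbb E_{\tau,\epsilon}\big[R^{(i)}_t\big]\le \mathbb E_\tau\Big[\max_{0\le h\le T-t}Q^\pi_{t,h}\Big].$$
   Context: This is the ''twin back-propagation'' estimate: one estimator ($i$) selects the rollout length with maximal value, and the other estimator ($j$) evaluates the return along that rollout. Expectations are assumed finite. *)

From HB Require Import structures.
From mathcomp Require Import all_boot all_order all_algebra.
From mathcomp Require Import all_classical all_reals all_analysis.
Set Implicit Arguments. Unset Strict Implicit. Unset Printing Implicit Defensive.
Import Order.TTheory GRing.Theory Num.Theory.
Local Open Scope ring_scope.

Fixpoint Vrec {R : realType} (T : nat) (g : R) (r Qt : nat -> R) (k h : nat) : R :=
  match h with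
  | 0 => if (k <= T)%N then Qt k else 0
  | h'.+1 => if (k <= T)%N then r k + g * Vrec T g r Qt k.+1 h' else 0
  end.

Definition Qtilde {R : realType} (T : nat) (Qsa eps : nat -> R) (k : nat) : R :=
  if (1 <= k <= T)%N then Qsa k + eps k else 0.

Definition Qpi_th {R : realType} (T : nat) (g : R) (r Qsa : nat -> R) (t h : nat) : R :=
  \sum_(0 <= l < h.+1) g ^+ l * r (t + l)%N
  + (if (h < T - t)%N then g ^+ h.+1 * Qsa (t + h).+1 else 0).

Definition maxQpi {R : realType} (T : nat) (g : R) (r Qsa : nat -> R) (t : nat) : R :=
  \big[Num.max/Qpi_th T g r Qsa t 0]_(h < (T - t).+1) Qpi_th T g r Qsa t h.

Definition argmax_pos_rule {R : realType} (sel : (nat -> R) -> nat) : Prop :=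
  forall v : nat -> R,
    (exists m, (0 < m)%N /\ forall h, (0 < h)%N -> v h <= v m) ->
    (0 < sel v)%N /\ forall h, (0 < h)%N -> v h <= v (sel v).

From HB Require Import structures.
From mathcomp Require Import all_boot all_order all_algebra.
From mathcomp Require Import all_classical all_reals all_analysis.
From mathcomp Require Import measurable_realfun zify.
Import Order.TTheory GRing.Theory Num.Theory.
Local Open Scope ring_scope.
Local Open Scope classical_set_scope.

(* Unrolling the recursion, V^(j)_{t,h} is the noise-free h-step return plus the
   single noise term g^h eps^(j)_{t+h}; for h > 0 the noise-free part is exactly
   Q^pi_{t,h-1}, hence at most max_h Q^pi_{t,h}.  The selected horizon h*_(i) is a
   function of eps^(i) alone, and it is positive because V^(i)_{t,.} is constant
   beyond T - t, so its maximum over h > 0 is attained.  On the product space,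
   integrating out the independent, centred eps^(j) first (Fubini) therefore
   leaves the noise-free return at h*_(i), which is bounded by max_h Q^pi_{t,h}
   pointwise; monotonicity of the outer expectation concludes. *)

Lemma exists_argmax_pos d (X : orderType d) (f : nat -> X) n :
  (forall h, (n <= h)%N -> f h = f n) ->
  exists m, (0 < m)%N /\ forall h, (0 < h)%N -> (f h <= f m)%O.
Proof.
move=> f_const.
have one_gt0 : (0 < @inord n.+1 1)%N by rewrite inordK.
have [m m_gt0 m_max] :=
  @arg_maxP _ X _ _ (fun i : 'I_n.+2 => 0 < i)%N (fun i => f i) one_gt0.
exists m; split=> // h h_gt0.
have [h_le|h_gt] := leqP h n.+1.
  have h_ord : (0 < @inord n.+1 h)%N by rewrite inordK.
  by have := m_max _ h_ord; rewrite /= inordK.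
have f_tail : f h = f (@ord_max n.+1).
  by rewrite /= (f_const h) ?(f_const n.+1) //; lia.
by rewrite f_tail; apply: m_max.
Qed.

Section value_recursion.
Variables (R : realType) (T : nat) (g : R) (rr : nat -> R).

Lemma Vrec_Qtilde (Qsa eps : nat -> R) k h : (0 < k)%N ->
  Vrec T g rr (Qtilde T Qsa eps) k h =
  Vrec T g rr Qsa k h + (if (k + h <= T)%N then g ^+ h * eps (k + h)%N else 0).
Proof.
elim: h k => [|h IH] k k_gt0 /=.
  rewrite addn0 expr0 mul1r; case: ifP => kT; last by rewrite addr0.
  by rewrite /Qtilde k_gt0 kT.
rewrite IH // addSnnS; case: ifP => kT; last by rewrite add0r ifF //; lia.
rewrite mulrDr addrA; congr (_ + _).
by case: ifP => _; rewrite ?mulr0 // mulrA -exprS.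
Qed.

Hypothesis rr_eq0 : forall k, (T < k)%N -> rr k = 0.

Lemma Vrec_closed_form (Qt : nat -> R) k h :
  Vrec T g rr Qt k h = \sum_(0 <= l < h) g ^+ l * rr (k + l)%N
    + (if (k + h <= T)%N then g ^+ h * Qt (k + h)%N else 0).
Proof.
elim: h k => [|h IH] k /=.
  by rewrite big_geq // add0r addn0 expr0 mul1r.
rewrite IH big_nat_recl // expr0 mul1r addn0 addSnnS.
case: ifP => kT.
  rewrite mulrDr mulr_sumr addrA; congr (_ + _ + _).
    by apply: eq_bigr => l _; rewrite mulrA -exprS addSnnS.
  by case: ifP => _; rewrite ?mulr0 // mulrA -exprS.
rewrite rr_eq0 ?add0r; last lia.
rewrite big1 ?add0r ?ifF //; first lia.
by move=> l _; rewrite rr_eq0 ?mulr0 //; lia.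
Qed.

Lemma Vrec_succ (Qt : nat -> R) t h : Vrec T g rr Qt t h.+1 = Qpi_th T g rr Qt t h.
Proof. by rewrite Vrec_closed_form /Qpi_th ltn_subRL addnS. Qed.

Lemma Qpi_th_tail (Qsa : nat -> R) t h : (T - t <= h)%N ->
  Qpi_th T g rr Qsa t h = Qpi_th T g rr Qsa t (T - t).
Proof.
move=> h_ge; rewrite /Qpi_th ltnn ifF; last by apply/negbTE; rewrite -leqNgt.
congr (_ + _); rewrite (@big_cat_nat _ _ _ (T - t).+1) //= -[RHS]addr0.
congr (_ + _); rewrite big_nat_cond big1 // => l /andP[/andP[l_gt _] _].
by rewrite rr_eq0 ?mulr0 //; lia.
Qed.

Lemma Qpi_th_le_maxQpi (Qsa : nat -> R) t h :
  Qpi_th T g rr Qsa t h <= maxQpi T g rr Qsa t.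
Proof.
have [h_le|h_gt] := leqP h (T - t).
  rewrite -ltnS in h_le.
  exact: (le_bigmax _ (Qpi_th T g rr Qsa t \o val) (Ordinal h_le)).
rewrite Qpi_th_tail; last exact: ltnW.
exact: (le_bigmax _ (Qpi_th T g rr Qsa t \o val) ord_max).
Qed.

Lemma Vrec_Qtilde_tail (Qsa eps : nat -> R) t h : (0 < t)%N -> (T - t < h)%N ->
  Vrec T g rr (Qtilde T Qsa eps) t h = Qpi_th T g rr Qsa t (T - t).
Proof.
case: h => [//|h] t_gt0 h_gt.
rewrite Vrec_Qtilde // Vrec_succ Qpi_th_tail // ifF ?addr0 //; lia.
Qed.

Lemma Vrec_le_maxQpi (Qt : nat -> R) t h : (0 < h)%N ->
  Vrec T g rr Qt t h <= maxQpi T g rr Qt t.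
Proof. by case: h => [//|h] _; rewrite Vrec_succ; exact: Qpi_th_le_maxQpi. Qed.

Lemma sel_Vrec_gt0 (sel : (nat -> R) -> nat) (Qsa eps : nat -> R) t :
  argmax_pos_rule sel -> (0 < t)%N ->
  (0 < sel (Vrec T g rr (Qtilde T Qsa eps) t))%N.
Proof.
move=> sel_argmax t_gt0; apply: (sel_argmax _ _).1.
apply: (@exists_argmax_pos _ _ _ (T - t).+1) => h h_gt.
by rewrite !Vrec_Qtilde_tail.
Qed.

End value_recursion.

Section probability_integrals.
Local Open Scope ereal_scope.
Context {d} {Om : measurableType d} {R : realType} (P : probability Om R).

Lemma integral_cst_probability (c : \bar R) : \int[P]_w c = c.
Proof.
by rewrite (integral_cst _ measurableT) -[RHS]mule1; congr (_ * _); exact: probability_setT.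
Qed.

Lemma integral_affine_centered (c b : R) (e : Om -> R) :
  P.-integrable setT (EFin \o e) -> \int[P]_w (e w)%:E = 0 ->
  \int[P]_w (c + b * e w)%:E = c%:E.
Proof.
move=> e_int e_centered; under eq_integral do rewrite EFinD EFinM.
rewrite integralD //; last exact: integrableZl.
  by rewrite integralZl // e_centered mule0 adde0 integral_cst_probability.
exact: finite_measure_integrable_cst.
Qed.

End probability_integrals.

Section integral_bounds.
Local Open Scope ereal_scope.

Lemma le_integral_measurable d (X : measurableType d) (R : realType)
    (mu : {measure set X -> \bar R}) (f g : X -> \bar R) :
  measurable_fun [set: X] f -> measurable_fun [set: X] g -> (forall x, f x <= g x) ->
  \int[mu]_x f x <= \int[mu]_x g x.
Proof.
move=> mf mg fg; rewrite integralE [leRHS]integralE leeB //.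
  apply: ge0_le_integral => //; try exact: measurable_funepos.
  by move=> x _; apply: (@funepos_le _ _ setT); [move=> y _; exact: fg|exact: in_setT].
apply: ge0_le_integral => //; try exact: measurable_funeneg.
by move=> x _; apply: (@funeneg_le _ _ setT); [move=> y _; exact: fg|exact: in_setT].
Qed.

Section product_bounds.
Context d1 d2 (X1 : measurableType d1) (X2 : measurableType d2) (R : realType).
Variables (f : X1 * X2 -> \bar R) (B : \bar R).

Lemma integral_prod_le_fst (m1 : probability X1 R)
    (m2 : {sigma_finite_measure set X2 -> \bar R}) :
  (m1 \x m2).-integrable setT f -> (forall x, \int[m2]_y f (x, y) <= B) ->
  \int[m1 \x m2]_z f z <= B.
Proof.
move=> f_int f_le; rewrite -integral12_prod_meas1 //.
rewrite -(integral_cst_probability m1 B).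
by apply: le_integral_measurable; [exact: (measurable_fubini_F f_int)|exact: measurable_cst|].
Qed.

Lemma integral_prod_le_snd (m1 : {sigma_finite_measure set X1 -> \bar R})
    (m2 : probability X2 R) :
  (m1 \x m2).-integrable setT f -> (forall y, \int[m1]_x f (x, y) <= B) ->
  \int[m1 \x m2]_z f z <= B.
Proof.
move=> f_int f_le; rewrite -integral21_prod_meas1 //.
rewrite -(integral_cst_probability m2 B).
by apply: le_integral_measurable; [exact: (measurable_fubini_G f_int)|exact: measurable_cst|].
Qed.

End product_bounds.
End integral_bounds.

Section integral_noise.
Context {d} {Om : measurableType d} {R : realType} {P : probability Om R}.

Lemma integral_Vrec_Qtilde (eps : nat -> Om -> R) T (g : R) (rr Qsa : nat -> R) t h :
  (0 < t)%N ->
  (forall k, (1 <= k <= T)%N ->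
     P.-integrable setT (fun w => (eps k w)%:E) /\ (\int[P]_w (eps k w)%:E = 0)%E) ->
  (\int[P]_w (Vrec T g rr (Qtilde T Qsa (fun k => eps k w)) t h)%:E
     = (Vrec T g rr Qsa t h)%:E)%E.
Proof.
move=> t_gt0 eps_centered; under eq_integral do rewrite Vrec_Qtilde //.
have [th|_] := boolP (t + h <= T)%N; last first.
  under eq_integral do rewrite addr0.
  exact: integral_cst_probability.
have [eps_int eps_mean0] := eps_centered (t + h)%N ltac:(lia).
exact: integral_affine_centered.
Qed.

Lemma integral_Vrec_Qtilde_le_maxQpi (eps : nat -> Om -> R) T (g : R) (rr Qsa : nat -> R) t h :
  (forall k, (T < k)%N -> rr k = 0) -> (0 < t)%N -> (0 < h)%N ->
  (forall k, (1 <= k <= T)%N ->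
     P.-integrable setT (fun w => (eps k w)%:E) /\ (\int[P]_w (eps k w)%:E = 0)%E) ->
  (\int[P]_w (Vrec T g rr (Qtilde T Qsa (fun k => eps k w)) t h)%:E
     <= (maxQpi T g rr Qsa t)%:E)%E.
Proof.
move=> rr_eq0 t_gt0 h_gt0 eps_centered.
by rewrite integral_Vrec_Qtilde // lee_fin Vrec_le_maxQpi.
Qed.

End integral_noise.

Theorem theorem1 (R : realType) (S A : Type) (Q : S -> A -> R)
  (g : R) (T t : nat)
  (d0 d1 d2 : measure_display)
  (Om0 : measurableType d0) (Om1 : measurableType d1) (Om2 : measurableType d2)
  (P0 : probability Om0 R)
  (P1 : Om0 -> probability Om1 R) (P2 : Om0 -> probability Om2 R)
  (s : nat -> Om0 -> S) (a : nat -> Om0 -> A) (r : nat -> Om0 -> R)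
  (eps1 : nat -> Om0 -> Om1 -> R) (eps2 : nat -> Om0 -> Om2 -> R)
  (sel : (nat -> R) -> nat) :
  0 <= g < 1 ->
  (1 <= t <= T)%N ->
  (forall k tau, (1 <= k <= T)%N ->
     (P1 tau).-integrable setT (fun w => (eps1 k tau w)%:E) /\
     (\int[P1 tau]_w (eps1 k tau w)%:E = 0)%E) ->
  (forall k tau, (1 <= k <= T)%N ->
     (P2 tau).-integrable setT (fun w => (eps2 k tau w)%:E) /\
     (\int[P2 tau]_w (eps2 k tau w)%:E = 0)%E) ->
  argmax_pos_rule sel ->
  let rr tau k := if (1 <= k <= T)%N then r k tau else 0 in
  let Qsa tau k := Q (s k tau) (a k tau) in
  let V1 tau w1 h := Vrec T g (rr tau) (Qtilde T (Qsa tau) (fun k => eps1 k tau w1)) t h in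
  let V2 tau w2 h := Vrec T g (rr tau) (Qtilde T (Qsa tau) (fun k => eps2 k tau w2)) t h in
  let R1 tau (w : Om1 * Om2) := V2 tau w.2 (sel (V1 tau w.1)) in
  let R2 tau (w : Om1 * Om2) := V1 tau w.1 (sel (V2 tau w.2)) in
  let M tau := maxQpi T g (rr tau) (Qsa tau) t in
  (forall tau, (P1 tau \x P2 tau)%E.-integrable setT (fun w => (R1 tau w)%:E)) ->
  (forall tau, (P1 tau \x P2 tau)%E.-integrable setT (fun w => (R2 tau w)%:E)) ->
  P0.-integrable setT (fun tau => \int[(P1 tau \x P2 tau)%E]_w (R1 tau w)%:E)%E ->
  P0.-integrable setT (fun tau => \int[(P1 tau \x P2 tau)%E]_w (R2 tau w)%:E)%E ->
  P0.-integrable setT (fun tau => (M tau)%:E) ->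
  (\int[P0]_tau (\int[(P1 tau \x P2 tau)%E]_w (R1 tau w)%:E)
     <= \int[P0]_tau (M tau)%:E)%E /\
  (\int[P0]_tau (\int[(P1 tau \x P2 tau)%E]_w (R2 tau w)%:E)
     <= \int[P0]_tau (M tau)%:E)%E.
Proof.
move=> _ /andP[t_gt0 _] eps1_centered eps2_centered sel_argmax
  rr Qsa V1 V2 R1 R2 M R1_int R2_int ER1_int ER2_int M_int.
have rr_eq0 tau k : (T < k)%N -> rr tau k = 0 by move=> kT; rewrite /rr ifF //; lia.
have sel_gt0 tau eps : (0 < sel (Vrec T g (rr tau) (Qtilde T (Qsa tau) eps) t))%N.
  by apply: sel_Vrec_gt0 => //; exact: rr_eq0.
split; apply: le_integral => // tau _.
- apply: integral_prod_le_fst => // w1; rewrite /R1 /V2 /M /=.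
  apply: integral_Vrec_Qtilde_le_maxQpi => //; first exact: rr_eq0.
    exact: sel_gt0.
  by move=> k; exact: eps2_centered.
- apply: integral_prod_le_snd; first exact: R2_int.
  move=> w2; rewrite /R2 /V1 /M /=.
  apply: integral_Vrec_Qtilde_le_maxQpi => //; first exact: rr_eq0.
    exact: sel_gt0.
  by move=> k; exact: eps1_centered.
Qed.
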